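(* Let $k$ be a field and $\mathsf{E}$ a left strictly locally finite $k$-linear category. Then the essential image of the comodule inclusion functor $\Upsilon_{\mathsf{E}^{op}}$ from right $\mathcal{C}_\mathsf{E}$-comodules to right $\mathsf{E}$-modules is closed under extensions: if $0\to L\to M\to N\to0$ is a short exact sequence of right $\mathsf{E}$-modules and $L$ and $N$ are each isomorphic to $\Upsilon_{\mathsf{E}^{op}}$ of some right $\mathcal{C}_\mathsf{E}$-comodule, then so is $M$.
   Context: A small $k$-linear category $\mathsf{E}$ has $k$-vector spaces $\operatorname{Hom}_\mathsf{E}(x,y)$, $k$-bilinear associative composition and identities with $\mathrm{id}_x\ne0$. A right $\mathsf{E}$-module is a $k$-linear functor $N:\mathsf{E}^{op}\to k\text{-Vect}$ (action maps $\operatorname{Hom}_\mathsf{E}(x,y)\otimes_kN(y)\to N(x)$). Write $x\preceq y$ if there are $n\ge1$ and objects $x=z_0,\dots,z_n=y$ with $\operatorname{Hom}_\mathsf{E}(z_{i-1},z_i)\neq0$ for all $i$; $x\prec y$ means $x\preceq y$ and not $y\preceq x$. $\mathsf{E}$ is locally finite if all $\operatorname{Hom}_\mathsf{E}(x,y)$ are finite-dimensional and every $\{z:x\preceq z\preceq y\}$ is finite; left strictly locally finite if moreover for every $y$ there is a finite set $X_y$ of objects with $x\prec y$ for $x\in X_y$ such that every $f:z\to y$ with $z\prec y$ equals $\sum_{i=1}^nh_ig_i$ ($n\ge0$) with $g_i:z\to x_i$, $h_i:x_i\to y$, $x_i\in X_y$. $\mathcal{C}_\mathsf{E}=\bigoplus_{x,y}\mathcal{C}^{x,y}$,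 $\mathcal{C}^{x,y}=\operatorname{Hom}_\mathsf{E}(x,y)^*$; counit zero on $\mathcal{C}^{x,y}$ for $x\ne y$, evaluation at $\mathrm{id}_x$ on $\mathcal{C}^{x,x}$; comultiplication $\mathcal{C}^{x,y}\to\bigoplus_z\mathcal{C}^{x,z}\otimes\mathcal{C}^{z,y}$ dual to composition $g\otimes h\mapsto hg$. For a right comodule $(\mathcal{N},\nu:\mathcal{N}\to\mathcal{N}\otimes\mathcal{C}_\mathsf{E})$, $\varphi\cdot n=(\mathrm{id}\otimes\varphi)\nu(n)$. With $e_x$ evaluation at $\mathrm{id}_x$ on $\mathcal{C}^{x,x}$ (zero elsewhere) and $\mathrm{ev}_f$, for $f\in\operatorname{Hom}_\mathsf{E}(x,y)$, evaluation at $f$ on $\mathcal{C}^{x,y}$ (zero elsewhere): $\Upsilon_{\mathsf{E}^{op}}(\mathcal{N})(x)=e_x\cdot\mathcal{N}$ and $f$ acts $e_y\cdot\mathcal{N}\to e_x\cdot\mathcal{N}$ by $n\mapsto\mathrm{ev}_f\cdot n$. *)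

From HB Require Import structures.
From mathcomp Require Import all_boot all_order all_algebra.
From Stdlib Require List.
From Stdlib Require Import Relations.
Set Implicit Arguments. Unset Strict Implicit. Unset Printing Implicit Defensive.
Import GRing.Theory.
Local Open Scope ring_scope.

(* A small k-linear category.  [comp g h] is the composite "h g" (first g, then h). *)
Record klincat (k : fieldType) := KLinCat {
  Obj : Type;
  Hom : Obj -> Obj -> lmodType k;
  comp : forall x y z, Hom x y -> Hom y z -> Hom x z;
  idm : forall x, Hom x x;
  comp_linl : forall x y z (h : Hom y z), linear (fun g : Hom x y => comp g h);
  comp_linr : forall x y z (g : Hom x y), linear (fun h : Hom y z => comp g h);
  compA : forall x y z w (f : Hom x y) (g : Hom y z) (h : Hom z w),
      comp f (comp g h) = comp (comp f g) h;
  comp_idl : forall x y (f : Hom x y), comp (idm x) f = f;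
  comp_idr : forall x y (f : Hom x y), comp f (idm y) = f;
  idm_neq0 : forall x, idm x != 0
}.
Arguments Obj {k} _.
Arguments Hom {k} _ _ _.
Arguments comp {k _ _ _ _}.
Arguments idm {k _}.

Section Defs.
Variables (k : fieldType) (E : klincat k).

Definition fin_dim (V : lmodType k) : Prop :=
  exists s : seq V, forall v : V, exists c : nat -> k,
    v = \sum_(i < size s) c i *: nth 0 s i.

Definition hom_nz (x y : Obj E) : Prop := exists f : Hom E x y, f != 0.
Definition preceq : Obj E -> Obj E -> Prop := clos_trans _ hom_nz.
Definition prec (x y : Obj E) : Prop := preceq x y /\ ~ preceq y x.

Definition locally_finite : Prop :=
  (forall x y, fin_dim (Hom E x y)) /\
  (forall x y, exists s : seq (Obj E),
      forall z, preceq x z -> preceq z y -> List.In z s).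

Definition left_strictly_locally_finite : Prop :=
  locally_finite /\
  forall y : Obj E, exists X : seq (Obj E),
    (forall x, List.In x X -> prec x y) /\
    forall z (f : Hom E z y), prec z y ->
      exists t : seq {x : Obj E & (Hom E z x * Hom E x y)%type},
        (forall u, List.In u t -> List.In (projT1 u) X) /\
        f = \sum_(u <- t) comp (projT2 u).1 (projT2 u).2.

(* right E-module = k-linear functor E^op -> k-Vect;
   [mact f n] is the action of f : x -> y, sending N(y) to N(x). *)
Record rmodule := RModule {
  mcar : Obj E -> lmodType k;
  mact : forall x y, Hom E x y -> mcar y -> mcar x;
  mact_linl : forall x y (n : mcar y), linear (fun f : Hom E x y => mact f n);
  mact_linr : forall x y (f : Hom E x y), linear (mact f);
  mact_id : forall x (n : mcar x), mact (idm x) n = n;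
  mact_comp : forall x y z (g : Hom E x y) (h : Hom E y z) (n : mcar z),
      mact (comp g h) n = mact g (mact h n)
}.

Record mod_hom (M N : rmodule) := ModHom {
  mh : forall x, mcar M x -> mcar N x;
  mh_lin : forall x, linear (@mh x);
  mh_nat : forall x y (f : Hom E x y) (m : mcar M y),
      @mh x (mact f m) = mact f (@mh y m)
}.
Arguments mh {M N} _ x.

Definition short_exact (L M N : rmodule) (i : mod_hom L M) (p : mod_hom M N) : Prop :=
  forall x,
    injective (mh i x) /\
    (forall m, mh p x m = 0 <-> exists l, mh i x l = m) /\
    (forall n, exists m, mh p x m = n).

(* Right comodule over C_E = (+)_{x,y} Hom(x,y)^*.  Using the canonical
   identification N (x) Hom(x,y)^* = Lin(Hom(x,y), N) (Hom(x,y) is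
   finite-dimensional), the coaction nu : N -> N (x) C_E is recorded by its
   components: [coact x y n f] = (id (x) ev_f) nu(n) = ev_f . n. *)
Record rcomodule := RComodule {
  ccar : lmodType k;
  coact : forall x y : Obj E, ccar -> Hom E x y -> ccar;
  coact_linl : forall x y (f : Hom E x y), linear (fun n => coact n f);
  coact_linr : forall x y (n : ccar), linear (@coact x y n);
  (* nu(n) lies in the direct sum: finitely many nonzero components *)
  coact_fin : forall n : ccar, exists s : seq (Obj E),
      forall x y (f : Hom E x y), coact n f != 0 -> List.In x s /\ List.In y s;
  (* counit: (id (x) eps) nu = id, eps = sum_x e_x *)
  coact_counit : forall (n : ccar) (s : seq (Obj E)), List.NoDup s ->
      (forall x, coact n (idm x) != 0 -> List.In x s) ->
      \sum_(x <- s) coact n (idm x) = n;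
  (* coassociativity (nu (x) id) nu = (id (x) Delta) nu, component (x,z),(z,y) *)
  coact_coassoc : forall x z y (g : Hom E x z) (h : Hom E z y) (n : ccar),
      coact (coact n h) g = coact n (comp g h);
  (* ... and components (x,z),(z',y) with z <> z', where Delta vanishes *)
  coact_coassoc0 : forall x z z' y (g : Hom E x z) (h : Hom E z' y) (n : ccar),
      z <> z' -> coact (coact n h) g = 0
}.

(* M is isomorphic (as a right E-module) to Upsilon_{E^op}(C), where
   Upsilon(C)(x) = e_x . C = { coact x x c (idm x) } and f : x -> y acts
   e_y . C -> e_x . C by c |-> ev_f . c = coact x y c f. *)
Definition iso_Upsilon (M : rmodule) (C : rcomodule) : Prop :=
  exists alpha : forall x, mcar M x -> ccar C,
    (forall x, linear (alpha x)) /\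
    (forall x, injective (alpha x)) /\
    (forall x (c : ccar C),
        (exists m, alpha x m = c) <-> (exists n : ccar C, c = coact n (idm x))) /\
    (forall x y (f : Hom E x y) (m : mcar M y),
        alpha x (mact f m) = coact (alpha y m) f).

End Defs.

From Pilot Require Import Defs.
From HB Require Import structures.
From mathcomp Require Import all_boot all_order all_algebra.
From mathcomp Require Import boolp.
From Stdlib Require List.
From Stdlib Require Import Relations.
Set Implicit Arguments. Unset Strict Implicit. Unset Printing Implicit Defensive.
Import GRing.Theory Defs.
Local Open Scope ring_scope.

(* A right E-module M is isomorphic to some Upsilon(C) exactly when it is
   rational: each m in M(y) has finite support, i.e. f . m = 0 for every
   f : z -> y except for z in a finite set; C is then the rational part of the
   direct sum of the M(z).  So it suffices that rationality of L and N passes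
   to M.  For m in M(y) let S be the support of p(m), and argue by induction
   along the strict order on the finite set S.  If y is not in S then
   p(m) = 0 and m comes from L.  Otherwise, if f . m <> 0 for some f : z -> y,
   either y <= z <= y, which leaves finitely many z, or z < y, and then f
   factors through the finite set X_y of objects strictly below y, where the
   induction hypothesis applies to the elements h . m. *)

Section LinearFacts.
Variables (k : fieldType) (U V : lmodType k) (f : U -> V) (f_lin : linear f).

Let F : {linear U -> V} := HB.pack f (GRing.isLinear.Build k U V *:%R f f_lin).

Lemma lin0 : f 0 = 0.
Proof. exact: raddf0 F. Qed.

Lemma linD u v : f (u + v) = f u + f v.
Proof. exact: (raddfD F u v). Qed.

Lemma linZ a u : f (a *: u) = a *: f u.
Proof. exact: (linearZ_LR F a u). Qed.

Lemma lin_sum (I : Type) (r : seq I) (P : pred I) (G : I -> U) :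
  f (\sum_(i <- r | P i) G i) = \sum_(i <- r | P i) f (G i).
Proof. exact: (raddf_sum F). Qed.

End LinearFacts.

Lemma sum_neq0_In (k : fieldType) (V : lmodType k) (I : Type) (r : seq I)
    (G : I -> V) :
  \sum_(i <- r) G i != 0 -> exists2 i, List.In i r & G i != 0.
Proof.
elim: r => [|a r IHr]; first by rewrite big_nil eqxx.
rewrite big_cons; have [/eqP ->|Ga] := boolP (G a == 0).
  by rewrite add0r => /IHr [i ri Gi]; exists i => //; right.
by exists a => //; left.
Qed.

Lemma In_mem (T : eqType) (x : T) (s : seq T) : x \in s -> List.In x s.
Proof.
elim: s => [|a s IHs] //; rewrite in_cons => /orP [/eqP ->|/IHs]; by [left|right].
Qed.

Lemma count_lt_subpred (T : Type) (a1 a2 : pred T) (s : seq T) (y : T) :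
  subpred a1 a2 -> List.In y s -> a2 y -> ~~ a1 y -> (count a1 s < count a2 s)%N.
Proof.
move=> a12 + a2y a1y; elim: s => [|a s IHs] //= [->|/IHs lt_s].
  by rewrite a2y (negbTE a1y) add0n add1n ltnS sub_count.
by rewrite -addnS leq_add //; case: (a1 a) (a12 a) => // /(_ isT) ->.
Qed.

Section FinitePred.
Variable T : Type.

Definition finite_pred (A : T -> Prop) := exists s : seq T, forall x, A x -> List.In x s.

Lemma finite_pred_sub (A B : T -> Prop) :
  finite_pred B -> (forall x, A x -> B x) -> finite_pred A.
Proof. by move=> [s Bs] AB; exists s => x /AB /Bs. Qed.

Lemma finite_predU (A B : T -> Prop) :
  finite_pred A -> finite_pred B -> finite_pred (fun x => A x \/ B x).
Proof.
move=> [sA As] [sB Bs]; exists (sA ++ sB) => x [/As|/Bs] xs;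
  apply: List.in_or_app; by [left|right].
Qed.

Lemma finite_pred_bigcup (I : Type) (r : seq I) (A : I -> T -> Prop) :
  (forall i, List.In i r -> finite_pred (A i)) ->
  finite_pred (fun x => exists2 i, List.In i r & A i x).
Proof.
elim: r => [|a r IHr] finA; first by exists [::] => x [].
have fin_r := IHr (fun i ri => finA i (or_intror ri)).
apply: (finite_pred_sub (finite_predU (finA a (or_introl erefl)) fin_r)).
by move=> x [i [<-|ri] Aix]; [left|right; exists i].
Qed.

Lemma finite_pred_bigcup_fin (I : finType) (A : I -> T -> Prop) :
  (forall i, finite_pred (A i)) -> finite_pred (fun x => exists i, A i x).
Proof.
move=> finA.
apply: (finite_pred_sub (finite_pred_bigcup (r := enum I) (fun i _ => finA i))).
by move=> x [i Aix]; exists i => //; apply: In_mem; rewrite mem_enum.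
Qed.

End FinitePred.

Section Support.
Variables (k : fieldType) (E : klincat k).

Definition support (Q : rmodule E) y (m : mcar Q y) (z : Obj E) : Prop :=
  exists g : Hom E z y, mact g m != 0.

Definition finite_support (Q : rmodule E) y (m : mcar Q y) :=
  finite_pred (support m).

Definition rational (Q : rmodule E) := forall y (m : mcar Q y), finite_support m.

Section ModuleFacts.
Variable Q : rmodule E.

Lemma mact0 x y (f : Hom E x y) : mact f (0 : mcar Q y) = 0.
Proof. exact: lin0 (mact_linr f). Qed.

Lemma mactD x y (f : Hom E x y) (a b : mcar Q y) :
  mact f (a + b) = mact f a + mact f b.
Proof. exact: (linD (mact_linr f) a b). Qed.

Lemma mactZ x y (f : Hom E x y) c (a : mcar Q y) : mact f (c *: a) = c *: mact f a.
Proof. exact: (linZ (mact_linr f) c a). Qed.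

Lemma mact0l x y (m : mcar Q y) : mact (0 : Hom E x y) m = 0.
Proof. exact: lin0 (mact_linl m). Qed.

Lemma support_id y (m : mcar Q y) : m != 0 -> support m y.
Proof. by exists (idm y); rewrite mact_id. Qed.

Lemma support_act x y (f : Hom E x y) (m : mcar Q y) z :
  support (mact f m) z -> support m z.
Proof. by case=> g gfm; exists (comp g f); rewrite mact_comp. Qed.

Lemma finite_support_act x y (f : Hom E x y) (m : mcar Q y) :
  finite_support m -> finite_support (mact f m).
Proof. by move=> fm; apply: (finite_pred_sub fm); apply: support_act. Qed.

Lemma support_preceq y (m : mcar Q y) z : support m z -> preceq z y.
Proof.
case=> g gm; apply: t_step; exists g.
by apply: contra gm => /eqP ->; rewrite mact0l.
Qed.

Lemma finite_support_span x' x (m : mcar Q x) : fin_dim (Hom E x' x) ->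
  (forall h : Hom E x' x, finite_support (mact h m)) ->
  finite_pred (fun z => exists h : Hom E x' x, support (mact h m) z).
Proof.
move=> [b spanb] finh.
have := finite_pred_bigcup_fin (fun j : 'I_(size b) => finh (nth 0 b j)).
move/finite_pred_sub; apply.
move=> z [h [g]]; have [c ->] := spanb h.
rewrite (lin_sum (mact_linl m)) (lin_sum (mact_linr g)).
case/sum_neq0_In => j _; rewrite (linZ (mact_linl m)) mactZ => gj.
by exists j, g; apply: contra gj => /eqP ->; rewrite scaler0.
Qed.

Lemma support_factor x (X : seq (Obj E)) :
  (forall z (f : Hom E z x), prec z x ->
     exists t : seq {x' : Obj E & (Hom E z x' * Hom E x' x)%type},
       (forall u, List.In u t -> List.In (projT1 u) X) /\
       f = \sum_(u <- t) comp (projT2 u).1 (projT2 u).2) ->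
  forall (m : mcar Q x) z, support m z -> prec z x ->
  exists2 x', List.In x' X & exists h : Hom E x' x, support (mact h m) z.
Proof.
move=> factor m z [f fm] zx; have [t [tX fE]] := factor z f zx.
move: fm; rewrite fE (lin_sum (mact_linl m)) => /sum_neq0_In [[x' [g h]] /tX tx'].
by rewrite mact_comp => ghm; exists x' => //; exists h, g.
Qed.

End ModuleFacts.

Lemma rational_iso_Upsilon (Q : rmodule E) (C : rcomodule E) :
  iso_Upsilon Q C -> rational Q.
Proof.
case=> alpha [alpha_lin [alpha_inj [_ alpha_nat]]] y m.
have [s Hs] := coact_fin (alpha y m); exists s => x [f fm].
suff /(Hs x y f) [] : coact (alpha y m) f != 0 by [].
rewrite -alpha_nat.
apply: contra fm => /eqP alpha0; apply/eqP; apply: (alpha_inj x).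
by rewrite alpha0 (lin0 (alpha_lin x)).
Qed.

End Support.

Section RationalComodule.
Variables (k : fieldType) (E : klincat k) (M : rmodule E).

Definition family := forall x : Obj E, mcar M x.

Definition finitely_supported (n : family) :=
  finite_pred (fun x => exists y, support (n y) x).

(* The comodule attached to M is the rational part of the direct sum of the
   M(x); ev_f, for f : x -> y, sends n to f . n_y placed in degree x. *)
Definition rfamily := {n : family | finitely_supported n}.

HB.instance Definition _ := gen_eqMixin rfamily.
HB.instance Definition _ := gen_choiceMixin rfamily.

Lemma rfamily_eq (a b : rfamily) : (forall x, sval a x = sval b x) -> a = b.
Proof.
case: a b => [a Ha] [b Hb] /= eq_ab.
have ea : a = b by apply: functional_extensionality_dep.
by subst b; rewrite (Prop_irrelevance Ha Hb).
Qed.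

Lemma finitely_supported0 : finitely_supported (fun x => 0).
Proof. by exists [::] => x [y [g]]; rewrite mact0 eqxx. Qed.

Lemma finitely_supportedD (a b : family) :
  finitely_supported a -> finitely_supported b ->
  finitely_supported (fun x => a x + b x).
Proof.
move=> fa fb; apply: (finite_pred_sub (finite_predU fa fb)) => x [y [g]].
rewrite mactD; have [/eqP ga|ga] := boolP (mact g (a y) == 0).
  by rewrite ga add0r => gb; right; exists y, g.
by left; exists y, g.
Qed.

Lemma finitely_supportedZ c (a : family) :
  finitely_supported a -> finitely_supported (fun x => c *: a x).
Proof.
move=> fa; apply: (finite_pred_sub fa) => x [y [g]]; rewrite mactZ => gca; exists y, g.
by apply: contra gca => /eqP ->; rewrite scaler0.
Qed.

Definition rzero : rfamily := exist _ _ finitely_supported0.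
Definition radd (a b : rfamily) : rfamily :=
  exist _ _ (finitely_supportedD (svalP a) (svalP b)).
Definition rscale c (a : rfamily) : rfamily :=
  exist _ _ (finitely_supportedZ c (svalP a)).
Definition ropp (a : rfamily) : rfamily := rscale (-1) a.

Lemma raddA : associative radd.
Proof. by move=> a b c; apply: rfamily_eq => x /=; rewrite addrA. Qed.
Lemma raddC : commutative radd.
Proof. by move=> a b; apply: rfamily_eq => x /=; rewrite addrC. Qed.
Lemma radd0 : left_id rzero radd.
Proof. by move=> a; apply: rfamily_eq => x /=; rewrite add0r. Qed.
Lemma raddN : left_inverse rzero ropp radd.
Proof. by move=> a; apply: rfamily_eq => x /=; rewrite scaleN1r addNr. Qed.

HB.instance Definition _ := GRing.isZmodule.Build rfamily raddA raddC radd0 raddN.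

Lemma rscaleA a b v : rscale a (rscale b v) = rscale (a * b) v.
Proof. by apply: rfamily_eq => x /=; rewrite scalerA. Qed.
Lemma rscale1 : left_id 1 rscale.
Proof. by move=> a; apply: rfamily_eq => x /=; rewrite scale1r. Qed.
Lemma rscaleDr : right_distributive rscale +%R.
Proof. by move=> a u v; apply: rfamily_eq => x /=; rewrite scalerDr. Qed.
Lemma rscaleDl v : {morph rscale^~ v : a b / a + b}.
Proof. by move=> a b; apply: rfamily_eq => x /=; rewrite scalerDl. Qed.

HB.instance Definition _ :=
  GRing.Zmodule_isLmodule.Build k rfamily rscaleA rscale1 rscaleDr rscaleDl.

Lemma sval_sum (I : Type) (r : seq I) (G : I -> rfamily) z :
  sval (\sum_(i <- r) G i) z = \sum_(i <- r) sval (G i) z.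
Proof. by elim/big_rec2: _ => // i a b _ /= ->. Qed.

Definition single x (v : mcar M x) : family := fun z =>
  match pselect (x = z) with
  | left e => eq_rect x (mcar M) v z e
  | right _ => 0
  end.

Lemma single_id x (v : mcar M x) : single v x = v.
Proof. by rewrite /single; case: pselect => // e; rewrite (Prop_irrelevance e erefl). Qed.

Lemma single_other x (v : mcar M x) z : x <> z -> single v z = 0.
Proof. by rewrite /single; case: pselect. Qed.

Lemma single_lin x z : linear (fun v : mcar M x => single v z).
Proof.
move=> c u v; have [<-|xz] := pselect (x = z); first by rewrite !single_id.
by rewrite !single_other // scaler0 addr0.
Qed.

Lemma single_sum_notin (s : seq (Obj E)) (n : family) z :
  ~ List.In z s -> \sum_(x <- s) single (n x) z = 0.
Proof.
elim: s => [_|a s IHs /List.not_in_cons [az zs]]; first by rewrite big_nil.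
rewrite big_cons single_other ?add0r ?IHs //.
by move=> e; apply: az.
Qed.

Lemma single_sum_in (s : seq (Obj E)) (n : family) z :
  List.NoDup s -> List.In z s -> \sum_(x <- s) single (n x) z = n z.
Proof.
elim: s => [//|a s IHs /List.NoDup_cons_iff [as_ s_uniq]] [<-|zs].
  by rewrite big_cons single_id single_sum_notin // addr0.
rewrite big_cons single_other ?add0r ?IHs //.
by move=> az; apply: as_; rewrite az.
Qed.

Lemma finitely_supported_single x (v : mcar M x) :
  finite_support v -> finitely_supported (single v).
Proof.
move=> fv; apply: (finite_pred_sub fv) => z [y [g]].
have [xy|xy] := pselect (x = y); last by rewrite single_other // mact0 eqxx.
by subst y; rewrite single_id; exists g.
Qed.

Lemma finite_support_component (n : family) y :
  finitely_supported n -> finite_support (n y).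
Proof. by move=> fn; apply: (finite_pred_sub fn) => z yz; exists y. Qed.

Definition rcoact x y (n : rfamily) (f : Hom E x y) : rfamily :=
  exist _ _ (finitely_supported_single
    (finite_support_act f (finite_support_component y (svalP n)))).

Lemma rcoact_linl x y (f : Hom E x y) : linear (fun n : rfamily => rcoact n f).
Proof.
by move=> c u v; apply: rfamily_eq => z /=; rewrite mactD mactZ single_lin.
Qed.

Lemma rcoact_linr x y (n : rfamily) : linear (@rcoact x y n).
Proof.
move=> c u v; apply: rfamily_eq => z /=.
by rewrite (linD (mact_linl _)) (linZ (mact_linl _)) single_lin.
Qed.

Lemma rcoact_eq0 x y (n : rfamily) (f : Hom E x y) :
  (rcoact n f == 0) = (mact f (sval n y) == 0).
Proof.
apply/eqP/eqP => [/(f_equal (fun c : rfamily => sval c x))|fn].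
  by rewrite /= single_id.
apply: rfamily_eq => z /=; rewrite fn.
by have [<-|xz] := pselect (x = z); rewrite ?single_id ?single_other.
Qed.

Lemma rcoact_fin (n : rfamily) : exists s : seq (Obj E),
  forall x y (f : Hom E x y), rcoact n f != 0 -> List.In x s /\ List.In y s.
Proof.
have [s Hs] := svalP n; exists s => x y f; rewrite rcoact_eq0 => fn.
split; apply: Hs; first by exists y, f.
by exists y; apply: support_id; apply: contra fn => /eqP ->; rewrite mact0.
Qed.

Lemma rcoact_counit (n : rfamily) (s : seq (Obj E)) : List.NoDup s ->
  (forall x, rcoact n (idm x) != 0 -> List.In x s) ->
  \sum_(x <- s) rcoact n (idm x) = n.
Proof.
move=> s_uniq s_supp; apply: rfamily_eq => z; rewrite sval_sum /=.
under eq_bigr do rewrite mact_id.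
have [zs|zs] := pselect (List.In z s); first exact: single_sum_in.
rewrite single_sum_notin //; apply/esym/eqP; apply: contraT => nz.
by case: zs; apply: s_supp; rewrite rcoact_eq0 mact_id.
Qed.

Lemma rcoact_coassoc x z y (g : Hom E x z) (h : Hom E z y) (n : rfamily) :
  rcoact (rcoact n h) g = rcoact n (comp g h).
Proof. by apply: rfamily_eq => w /=; rewrite single_id mact_comp. Qed.

Lemma rcoact_coassoc0 x z z' y (g : Hom E x z) (h : Hom E z' y) (n : rfamily) :
  z <> z' -> rcoact (rcoact n h) g = 0.
Proof.
move=> zz'; apply: rfamily_eq => w /=.
rewrite (@single_other z' _ z); last by move=> e; apply: zz'.
by rewrite mact0 (lin0 (@single_lin x w)).
Qed.

Definition rational_comodule : rcomodule E :=
  RComodule rcoact_linl rcoact_linr rcoact_fin rcoact_counit rcoact_coassoc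
    rcoact_coassoc0.

Lemma iso_Upsilon_rational : rational M -> iso_Upsilon M rational_comodule.
Proof.
move=> Mrat; pose alpha x (m : mcar M x) : rfamily :=
  exist _ _ (finitely_supported_single (Mrat x m)).
exists alpha; split; [|split; [|split]].
- by move=> x c u v; apply: rfamily_eq => z /=; rewrite single_lin.
- by move=> x u v /(f_equal (fun c : rfamily => sval c x)); rewrite /= !single_id.
- move=> x c; split => [[m <-]|[n ->]].
    by exists (alpha x m); apply: rfamily_eq => z /=; rewrite mact_id single_id.
  by exists (sval n x); apply: rfamily_eq => z /=; rewrite mact_id.
- by move=> x y f m; apply: rfamily_eq => z /=; rewrite single_id.
Qed.

End RationalComodule.

Lemma prec_irrefl (k : fieldType) (E : klincat k) (x : Obj E) : ~ prec x x.
Proof. by case. Qed.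

Lemma prec_trans (k : fieldType) (E : klincat k) (x y z : Obj E) :
  prec x y -> prec y z -> prec x z.
Proof.
move=> [xy nyx] [yz nzy]; split; first exact: t_trans xy yz.
by move=> zx; apply: nyx; apply: t_trans yz zx.
Qed.

Section Extension.
Variables (k : fieldType) (E : klincat k) (HE : left_strictly_locally_finite E).
Variables (L M N : rmodule E) (i : mod_hom L M) (p : mod_hom M N).
Hypotheses (Hex : short_exact i p) (Lrat : rational L).

Lemma finite_support_ker y (m : mcar M y) : mh p m = 0 -> finite_support m.
Proof.
move=> /(proj1 (proj2 (Hex y))) [l <-].
by apply: (finite_pred_sub (Lrat l)) => z [g]; rewrite -mh_nat => gl; exists g;
  apply: contra gl => /eqP ->; rewrite (lin0 (mh_lin i (x := z))).
Qed.

Variable S : seq (Obj E).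

Definition finite_over x := forall m : mcar M x,
  (forall z, support (mh p m) z -> List.In z S) -> finite_support m.

Lemma finite_over_notin x : ~ List.In x S -> finite_over x.
Proof.
move=> xS m pmS; apply: finite_support_ker; apply/eqP; apply: contraT => pm.
by case: xS; apply/pmS/support_id.
Qed.

Lemma finite_over_step x : (forall x', prec x' x -> finite_over x') -> finite_over x.
Proof.
case: HE => [[Hdim Hint] Hfactor] IH m pmS.
have [X [Xx factor]] := Hfactor x.
have finI : finite_pred (fun z => preceq x z /\ preceq z x).
  by have [I I_int] := Hint x x; exists I => z [xz zx]; apply: I_int.
have finX : forall x', List.In x' X ->
    finite_pred (fun z => exists h : Hom E x' x, support (mact h m) z).
  move=> x' x'X; apply: finite_support_span (Hdim x' x) _ => h.
  by apply: (IH x' (Xx x' x'X)) => z; rewrite mh_nat => /support_act /pmS.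
apply: (finite_pred_sub (finite_predU finI (finite_pred_bigcup finX))).
move=> z zm; have zx := support_preceq zm.
have [xz|xz] := pselect (preceq x z); first by left.
by right; apply: support_factor factor _ _ zm _.
Qed.

Definition below x := count (fun s => `[< prec s x >]) S.

Lemma below_lt x' x : List.In x' S -> prec x' x -> (below x' < below x)%N.
Proof.
move=> x'S x'x; apply: (count_lt_subpred (y := x')) => //.
- by move=> s /asboolP sx'; apply/asboolP; apply: prec_trans sx' x'x.
- exact/asboolP.
- by apply/asboolP; apply: prec_irrefl.
Qed.

Lemma finite_over_all x : finite_over x.
Proof.
have [n] := ubnP (below x); elim: n x => // n IHn x; rewrite ltnS => ub.
apply: finite_over_step => x' x'x; have [x'S|x'S] := pselect (List.In x' S).
  by apply: IHn; apply: leq_trans (below_lt x'S x'x) ub.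
exact: finite_over_notin.
Qed.

End Extension.

Lemma rational_extension (k : fieldType) (E : klincat k)
    (HE : left_strictly_locally_finite E) (L M N : rmodule E)
    (i : mod_hom L M) (p : mod_hom M N) :
  short_exact i p -> rational L -> rational N -> rational M.
Proof.
move=> Hex Lrat Nrat y m; have [S pmS] := Nrat y (mh p m).
exact: (finite_over_all HE Hex Lrat pmS).
Qed.

Theorem proposition6p7 (k : fieldType) (E : klincat k)
    (HE : left_strictly_locally_finite E)
    (L M N : rmodule E) (i : mod_hom L M) (p : mod_hom M N)
    (Hex : short_exact i p)
    (CL CN : rcomodule E)
    (HL : iso_Upsilon L CL) (HN : iso_Upsilon N CN) :
  exists CM : rcomodule E, iso_Upsilon M CM.
Proof.
exists (rational_comodule M); apply: iso_Upsilon_rational.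
exact: (rational_extension HE Hex (rational_iso_Upsilon HL) (rational_iso_Upsilon HN)).
Qed.
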